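(* Let $V$ be a linear subspace of $\mathbb{R}^m$ with $\dim V=l$, let $\{v_1,\dots,v_l\}$ be a basis of $V$ extended to a basis $\{v_1,\dots,v_l,\dots,v_m\}$ of $\mathbb{R}^m$. Let $\varphi:V\to\mathbb{R}^m$ be a linear map with $\varphi(x)\ne x$ for every nonzero $x\in V$, whose $m\times l$ matrix with respect to these bases (the $j$-th column giving the coordinates of $\varphi(v_j)$ in the basis $v_1,\dots,v_m$) has the form $\begin{bmatrix} J\\ *\end{bmatrix}$, where $J$ is an $l\times l$ block diagonal matrix all of whose diagonal blocks are of one single type $i_0$, with $i_0\in\{1,5,6\}$. Then there exists a linear subspace $V'\subseteq V$ with $\dim V'\ge l/3$, $\varphi(V')\cap V'=\{0\}$, and $\varphi$ injective on $V'$.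
   Context: For a positive integer $k$ and $a\in\mathbb{R}$, $J_k(a)$ is the $k\times k$ Jordan block with $a$ on the diagonal, $1$ on the superdiagonal, and $0$ elsewhere. For a positive integer $s$ and $a,b\in\mathbb{R}$ with $b\ne0$, $C_s(a,b)$ is the $2s\times 2s$ block upper-triangular matrix whose diagonal $2\times2$ blocks are all $\begin{bmatrix} a&b\\-b&a\end{bmatrix}$, whose $2\times 2$ blocks immediately above the diagonal blocks are the $2\times 2$ identity matrix, and which is zero elsewhere. Block types: Type 1 is $J_1(1)$; Type 5 is $J_k(a)$ with $k>1$ (any $a\in\mathbb{R}$); Type 6 is $C_s(a,b)$ with $b\neq 0$ (any $s\ge1$, $a\in\mathbb{R}$). *)

From HB Require Import structures.
From mathcomp Require Import all_boot all_order all_algebra.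
From mathcomp Require Import reals.
From Stdlib Require List.
Set Implicit Arguments. Unset Strict Implicit. Unset Printing Implicit Defensive.
Import Order.TTheory GRing.Theory Num.Theory.
Local Open Scope ring_scope.

(* Conventions: vectors of R^m are row vectors 'rV_m, with m = l + k.
   A basis v_1..v_m of R^m is the list of rows of an invertible matrix
   B : 'M_(l+k); V is spanned by the first l rows, i.e. V = usubmx B.
   Matrix entries are indexed from 0. *)

Section Defs.
Variable R : realType.

Definition jordan_fun (a : R) (i j : nat) : R :=
  if (i == j)%N then a else if (j == i.+1)%N then 1 else 0.

(* Entries (0-indexed) of C_s(a,b): 2x2 diagonal blocks [[a,b],[-b,a]],
   2x2 identity blocks immediately above the diagonal blocks, 0 elsewhere. *)
Definition cblock_fun (a b : R) (i j : nat) : R :=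
  let p := (i %/ 2)%N in let q := (j %/ 2)%N in
  let r := (i %% 2)%N in let c := (j %% 2)%N in
  if p == q then (if r == c then a else if r == 0%N then b else - b)
  else if q == p.+1 then (if r == c then 1 else 0)
  else 0.

Fixpoint blockdiag_fun (bs : seq (nat * (nat -> nat -> R))) (i j : nat) : R :=
  match bs with
  | [::] => 0
  | (n, f) :: bs' =>
      if ((i < n) && (j < n))%N then f i j
      else if ((n <= i) && (n <= j))%N then blockdiag_fun bs' (i - n) (j - n)
      else 0
  end.

Definition type_block (t : nat) (n : nat) (f : nat -> nat -> R) : Prop :=
  [\/ [/\ t = 1%N, n = 1%N & f = jordan_fun 1],
      [/\ t = 5%N, (1 < n)%N & exists a : R, f = jordan_fun a]
    | [/\ t = 6%N & exists (s : nat) (a b : R),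
          [/\ (0 < s)%N, b != 0, n = (2 * s)%N & f = cblock_fun a b]]].

Definition one_type_blockdiag (l : nat) (t : nat) (J : 'M[R]_l) : Prop :=
  exists bs : seq (nat * (nat -> nat -> R)),
    [/\ forall p, Stdlib.Lists.List.In p bs -> type_block t p.1 p.2,
        sumn (map fst bs) = l &
        J = \matrix_(i < l, j < l) blockdiag_fun bs i j].

(* The linear map phi : V -> R^m whose m x l matrix w.r.t. the bases
   (v_1..v_l of V, v_1..v_m of R^m; rows of B) is M, i.e.
   phi(v_j) = sum_i M i j v_i.  For x in V with coordinates c (the first l
   coordinates of x in the basis B), phi x = sum_j c_j phi(v_j). *)
Definition phi (l k : nat) (B : 'M[R]_(l + k)) (M : 'M[R]_(l + k, l))
    (x : 'rV[R]_(l + k)) : 'rV[R]_(l + k) :=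
  let c : 'rV[R]_l := lsubmx (x *m invmx B) in
  c *m M^T *m B.

End Defs.

From HB Require Import structures.
From mathcomp Require Import all_boot all_order all_algebra.
From mathcomp Require Import reals.
From mathcomp Require Import zify.
Set Implicit Arguments. Unset Strict Implicit. Unset Printing Implicit Defensive.
Import Order.TTheory GRing.Theory Num.Theory.
Local Open Scope ring_scope.

(* Write x in V as c *m usubmx B and let N := dsubmx M; then phi x has
   coordinates c J^T on V and c N^T on the complementary basis vectors.  So
   for a subspace W of R^l, V' := W *m usubmx B has the required properties as
   soon as c in W, c J^T in W and c N^T = 0 force c = 0: then x, phi x in V'
   forces x = 0, which gives both the trivial intersection and, phi being
   linear, injectivity.  For type 1, J = 1 and W = R^l works because phi has
   no fixed points.  For J_n(a) (n > 1) we take for W the odd coordinates and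
   for C_s(a,b) the even ones: every selected column j has an unselected row
   (j - 1, resp. j + 1) whose only nonzero entry in a selected column is at j,
   so c J^T in W kills c_j.  In each block at least a third of the coordinates
   are selected. *)

Section CoordinateSubspace.
Variables (R : fieldType) (l : nat).
Implicit Types (f : nat -> nat -> R) (sel : pred nat).

Definition isolating f sel := forall j, (j < l)%N -> sel j ->
  exists i, [/\ (i < l)%N, ~~ sel i, f i j != 0 &
    forall j', (j' < l)%N -> sel j' -> j' != j -> f i j' = 0].

Definition coord_mx sel : 'M[R]_(#|[set j : 'I_l | sel j]|, l) :=
  rowsub enum_val 1%:M.

Lemma card_sel sel : #|[set j : 'I_l | sel j]| = count sel (iota 0 l).
Proof.
rewrite cardsE cardE /enum_mem size_filter -enumT -val_enum_ord count_map.
exact: eq_count.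
Qed.

Lemma rank_coord_mx sel : \rank (coord_mx sel) = count sel (iota 0 l).
Proof.
rewrite -card_sel; apply/eqP/row_freeP; exists (coord_mx sel)^T.
apply/matrixP => r r'; rewrite !mxE (bigD1 (enum_val r)) //= big1 ?addr0.
  by rewrite !mxE eqxx mul1r eq_sym (inj_eq enum_val_inj).
by move=> j /negbTE nj; rewrite !mxE eq_sym nj mul0r.
Qed.

Lemma coord_mx_supp {sel} {c : 'rV[R]_l} {j : 'I_l} :
  (c <= coord_mx sel)%MS -> ~~ sel j -> c 0 j = 0.
Proof.
move=> /submxP[e ->] nj; rewrite mxE big1 // => r _; rewrite !mxE.
have := enum_valP r; rewrite inE => sel_r.
have -> : (enum_val r == j) = false by apply: contraNF nj => /eqP <-.
by rewrite mulr0.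
Qed.

Lemma isolating_coord_mx f sel (c : 'rV[R]_l) :
  isolating f sel -> (c <= coord_mx sel)%MS ->
  (c *m (\matrix_(i < l, j < l) f i j)^T <= coord_mx sel)%MS -> c = 0.
Proof.
move=> iso cW cAW; apply/matrixP => z j; rewrite ord1 [RHS]mxE.
case sj: (sel j); last exact: (coord_mx_supp cW (negbT sj)).
have [i [il si fij fi0]] := iso j (ltn_ord j) sj.
have := coord_mx_supp cAW (j := Ordinal il) si.
rewrite !mxE (bigD1 j) //= big1 ?addr0 => [/eqP|j' nj'].
  by rewrite !mxE mulf_eq0 (negbTE fij) orbF => /eqP.
rewrite !mxE /=; case sj': (sel j').
  by rewrite fi0 ?mulr0 // sj'.
by rewrite (coord_mx_supp cW) ?sj' // mul0r.
Qed.

End CoordinateSubspace.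

Arguments coord_mx {R} l sel.

Section BlockSelection.
Variable R : realType.
Implicit Types (f : nat -> nat -> R) (sel : pred nat)
  (bs : seq (nat * (nat -> nat -> R))).

Definition third_isolating L f sel :=
  (L <= 3 * count sel (iota 0 L))%N /\ isolating L f sel.

Definition cat_sel n sel1 sel2 : pred nat :=
  fun j => if (j < n)%N then sel1 j else sel2 (j - n)%N.

Lemma count_cat_sel n L sel1 sel2 :
  count (cat_sel n sel1 sel2) (iota 0 (n + L)) =
  (count sel1 (iota 0 n) + count sel2 (iota 0 L))%N.
Proof.
rewrite iotaD count_cat [(0 + n)%N]addnC iotaDl count_map.
congr (_ + _)%N.
  by apply: eq_in_count => j; rewrite mem_iota /cat_sel => /andP[_ ->].
by apply: eq_count => j; rewrite /= /cat_sel ltnNge leq_addr addKn.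
Qed.

Lemma isolating_blockdiag_cons n f bs sel1 sel2 :
  isolating n f sel1 -> isolating (sumn (map fst bs)) (blockdiag_fun bs) sel2 ->
  isolating (n + sumn (map fst bs)) (blockdiag_fun ((n, f) :: bs))
    (cat_sel n sel1 sel2).
Proof.
move=> iso1 iso2 j jnL; rewrite /cat_sel /=.
case: (ltnP j n) => [jn sj | nj sj].
  have [i [ilt si fij fi0]] := iso1 j jn sj.
  exists i; rewrite ilt /=; split => //; first lia.
  move=> j' _; case: (ltnP j' n) => [j'n | nj'] sj' j'j; first exact: fi0.
  by rewrite leqNgt ilt.
have [i [ilt si fij fi0]] := iso2 (j - n)%N ltac:(lia) sj.
have ni : (n + i < n)%N = false by lia.
exists (n + i)%N; rewrite ni leq_addr /= addKn; split => //; first lia.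
move=> j' j'nL; case: (ltnP j' n) => [j'n | nj'] sj' j'j; first by [].
apply: fi0 => //; first lia.
by apply: contraNneq j'j => /eqP; lia.
Qed.

Lemma blockdiag_third_isolating bs :
  (forall p, List.In p bs -> exists sel, third_isolating p.1 p.2 sel) ->
  exists sel, third_isolating (sumn (map fst bs)) (blockdiag_fun bs) sel.
Proof.
elim: bs => [_ | [n f] bs IH blocks_iso]; first by exists xpred0.
have [sel1 [cnt1 iso1]] := blocks_iso (n, f) (or_introl erefl).
have [sel2 [cnt2 iso2]] := IH (fun p bs_p => blocks_iso p (or_intror bs_p)).
exists (cat_sel n sel1 sel2); split; last exact: isolating_blockdiag_cons.
by rewrite /= count_cat_sel mulnDr leq_add.
Qed.

Lemma count_odd_iota n : count odd (iota 0 n) = n./2.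
Proof.
elim: n => // n IH; rewrite -addn1 iotaD count_cat IH /= addn0; lia.
Qed.

Lemma jordan_third_isolating n (a : R) :
  (1 < n)%N -> third_isolating n (jordan_fun a) odd.
Proof.
move=> n_gt1; split; first by rewrite count_odd_iota; lia.
move=> j jn oj; exists j.-1; rewrite /jordan_fun.
have -> : (j.-1 == j) = false by apply/eqP; lia.
have -> : (j == j.-1.+1) by apply/eqP; lia.
split; [lia | lia | exact: oner_neq0 | move=> j' _ oj' /eqP j'j].
have -> : (j.-1 == j') = false by apply/eqP; lia.
by have -> : (j' == j.-1.+1) = false by apply/eqP; lia.
Qed.

Lemma cblock_third_isolating s (a b : R) :
  (0 < s)%N -> b != 0 -> third_isolating (2 * s) (cblock_fun a b) (predC odd).
Proof.
move=> s_gt0 b_neq0; split.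
  by have := count_predC odd (iota 0 (2 * s)); rewrite count_odd_iota size_iota; lia.
move=> j js /= ej; exists j.+1; rewrite /cblock_fun.
have -> : (j.+1 %/ 2 == j %/ 2)%N by apply/eqP; lia.
have -> : (j.+1 %% 2 == j %% 2)%N = false by apply/eqP; lia.
have -> : (j.+1 %% 2 == 0)%N = false by apply/eqP; lia.
split; [lia | rewrite /= negbK; lia | by rewrite oppr_eq0 | move=> j' _ /= ej' /eqP j'j].
have -> : (j.+1 %/ 2 == j' %/ 2)%N = false by apply/eqP; lia.
have -> : (j.+1 %% 2 == j' %% 2)%N = false by apply/eqP; lia.
by case: ifP.
Qed.

Lemma type_block_third_isolating t n f :
  t \in [:: 5%N; 6%N] -> type_block t n f -> exists sel, third_isolating n f sel.
Proof.
move=> t_56 [[t_1 _ _] | [_ n_gt1 [a ->]] | [_ [s [a [b [s_gt0 b_neq0 -> ->]]]]]].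
- by rewrite t_1 in t_56.
- by exists odd; apply: jordan_third_isolating.
- by exists (predC odd); apply: cblock_third_isolating.
Qed.

Lemma one_type_blockdiag_isolating t l (J : 'M[R]_l) :
  t \in [:: 5%N; 6%N] -> one_type_blockdiag t J ->
  exists m (W : 'M[R]_(m, l)), (l <= 3 * \rank W)%N /\
    forall c : 'rV_l, (c <= W)%MS -> (c *m J^T <= W)%MS -> c = 0.
Proof.
move=> t_56 [bs [bs_type sum_l ->]].
have [sel [cnt iso]] : exists sel, third_isolating l (blockdiag_fun bs) sel.
  rewrite -sum_l; apply: blockdiag_third_isolating => p /bs_type.
  exact: type_block_third_isolating.
exists _, (coord_mx l sel); split; first by rewrite rank_coord_mx.
by move=> c; apply: isolating_coord_mx.
Qed.

Lemma blockdiag_type1 bs i j :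
  (forall p, List.In p bs -> type_block 1 p.1 p.2) ->
  (i < sumn (map fst bs))%N -> (j < sumn (map fst bs))%N ->
  blockdiag_fun bs i j = (i == j)%:R.
Proof.
elim: bs i j => [//|[n f] bs IH] i j bs_type1.
have [[_ /= -> ->]|[]|[]] // := bs_type1 (n, f) (or_introl erefl).
case: i j => [|i] [|j] //= i_lt j_lt; rewrite !subn1 /= eqSS.
by apply: IH => // p bs_p; apply: bs_type1; right.
Qed.

Lemma one_type_blockdiag1 l (J : 'M[R]_l) : one_type_blockdiag 1 J -> J = 1%:M.
Proof.
move=> [bs [bs_type1 sum_l ->]]; apply/matrixP => i j; rewrite !mxE.
by apply: blockdiag_type1; rewrite ?sum_l.
Qed.

End BlockSelection.

Section Transversal.
Variables (R : realType) (l k : nat) (B : 'M[R]_(l + k)) (M : 'M[R]_(l + k, l)).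

Lemma phi0 : phi B M 0 = 0.
Proof. by rewrite /phi mul0mx linear0 !mul0mx. Qed.

Lemma phiB x y : phi B M (x - y) = phi B M x - phi B M y.
Proof. by rewrite /phi mulmxBl linearB /= !mulmxBl. Qed.

Lemma phi_transversal (V : 'M[R]_(l + k)) :
  (forall x, (x <= V)%MS -> (phi B M x <= V)%MS -> x = 0) ->
  (forall x, (x <= V)%MS -> (phi B M x <= V)%MS -> phi B M x = 0) /\
  (forall x y, (x <= V)%MS -> (y <= V)%MS -> phi B M x = phi B M y -> x = y).
Proof.
move=> V_phi_eq0; split=> [x xV /(V_phi_eq0 _ xV) -> | x y xV yV phi_xy].
  exact: phi0.
apply/eqP; rewrite -subr_eq0; apply/eqP/V_phi_eq0.
  by rewrite addmx_sub ?eqmx_opp.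
by rewrite phiB phi_xy subrr sub0mx.
Qed.

Lemma mul_usubmx m (c : 'M[R]_(m, l)) : c *m usubmx B = row_mx c 0 *m B.
Proof. by rewrite -{2}(vsubmxK B) mul_row_col mul0mx addr0. Qed.

Lemma phi_usubmx (c : 'rV[R]_l) : B \in unitmx ->
  phi B M (c *m usubmx B) =
  c *m (usubmx M)^T *m usubmx B + c *m (dsubmx M)^T *m dsubmx B.
Proof.
move=> B_unit; rewrite /phi mul_usubmx mulmxK // row_mxKl.
by rewrite -{1}(vsubmxK M) tr_col_mx mul_mx_row -mul_row_col vsubmxK.
Qed.

Hypothesis B_unit : B \in unitmx.

Lemma mul_vsubmx_eq0 m (c : 'M[R]_(m, l)) (y : 'M[R]_(m, k)) :
  c *m usubmx B + y *m dsubmx B = 0 -> c = 0 /\ y = 0.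
Proof.
rewrite -mul_row_col vsubmxK => /eqP; rewrite mulmx_free_eq0 ?row_free_unit //.
by rewrite -row_mx0 => /eqP /eq_row_mx.
Qed.

Lemma row_free_usubmx : row_free (usubmx B).
Proof.
rewrite -[usubmx B]mul1mx mul_usubmx /row_free mxrankMfree ?row_free_unit //.
by rewrite rank_row_mx0 mxrank1.
Qed.

Lemma coord_phi_transversal m (W : 'M[R]_(m, l)) :
  (forall c : 'rV_l, (c <= W)%MS -> (c *m (usubmx M)^T <= W)%MS ->
     c *m (dsubmx M)^T = 0 -> c = 0) ->
  exists V : 'M[R]_(l + k), [/\ (V <= usubmx B)%MS, \rank V = \rank W,
    forall x, (x <= V)%MS -> (phi B M x <= V)%MS -> phi B M x = 0 &
    forall x y, (x <= V)%MS -> (y <= V)%MS -> phi B M x = phi B M y -> x = y].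
Proof.
move=> W_sep; exists <<W *m usubmx B>>%MS.
suff V_phi_eq0 x : (x <= <<W *m usubmx B>>)%MS ->
    (phi B M x <= <<W *m usubmx B>>)%MS -> x = 0.
  have [phi_cap phi_inj] := phi_transversal V_phi_eq0.
  split=> //; rewrite genmxE ?submxMl //.
  by rewrite mxrankMfree ?row_free_usubmx.
rewrite !genmxE => /submxP[e ->] /submxP[e' phi_x].
rewrite mulmxA in phi_x *; set c := e *m W.
have /mul_vsubmx_eq0[/eqP cJ cN] :
    (c *m (usubmx M)^T - e' *m W) *m usubmx B + c *m (dsubmx M)^T *m dsubmx B = 0.
  by rewrite mulmxBl addrAC -phi_usubmx // phi_x mulmxA subrr.
rewrite subr_eq0 in cJ.
by rewrite (W_sep c) ?mul0mx ?submxMl ?(eqP cJ) ?submxMl.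
Qed.

Lemma fixed_point_free_coord_eq0 : usubmx M = 1%:M ->
  (forall x, (x <= usubmx B)%MS -> x != 0 -> phi B M x != x) ->
  forall c : 'rV_l, c *m (dsubmx M)^T = 0 -> c = 0.
Proof.
move=> M_1 phi_nofix c cN; apply/eqP; apply: contraT => c_neq0.
have x_neq0 : c *m usubmx B != 0 by rewrite mulmx_free_eq0 ?row_free_usubmx.
have := phi_nofix _ (submxMl _ _) x_neq0.
by rewrite phi_usubmx // cN mul0mx addr0 M_1 trmx1 mulmx1 eqxx.
Qed.

End Transversal.

Theorem lemma3p3 (R : realType) (l k : nat) (B : 'M[R]_(l + k))
    (M : 'M[R]_(l + k, l)) (J : 'M[R]_l) (i0 : nat) :
  B \in unitmx ->
  i0 \in [:: 1%N; 5%N; 6%N] ->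
  usubmx M = J ->
  one_type_blockdiag i0 J ->
  (forall x : 'rV[R]_(l + k), (x <= usubmx B)%MS -> x != 0 -> phi B M x != x) ->
  exists V' : 'M[R]_(l + k),
    [/\ (V' <= usubmx B)%MS,
        (l <= 3 * \rank V')%N,
        (forall x : 'rV[R]_(l + k), (x <= V')%MS -> (phi B M x <= V')%MS ->
            phi B M x = 0) &
        (forall x y : 'rV[R]_(l + k), (x <= V')%MS -> (y <= V')%MS ->
            phi B M x = phi B M y -> x = y)].
Proof.
move=> B_unit i0_156 MJ J_type phi_nofix.
suff [m [W [rank_W W_sep]]] : exists m (W : 'M[R]_(m, l)), (l <= 3 * \rank W)%N /\
    forall c : 'rV_l, (c <= W)%MS -> (c *m J^T <= W)%MS ->
      c *m (dsubmx M)^T = 0 -> c = 0.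
  rewrite -MJ in W_sep.
  have [V' [V'_sub rank_V' phi_cap phi_inj]] := coord_phi_transversal B_unit W_sep.
  by exists V'; rewrite rank_V'.
move: i0_156; rewrite in_cons => /orP[/eqP i0_1 | i0_56].
  rewrite i0_1 in J_type; exists l, 1%:M; split; first by rewrite mxrank1 leq_pmull.
  move=> c _ _; apply: (fixed_point_free_coord_eq0 B_unit _ phi_nofix).
  by rewrite MJ; apply: one_type_blockdiag1.
have [m [W [rank_W J_sep]]] := one_type_blockdiag_isolating i0_56 J_type.
by exists m, W; split=> // c cW cJW _; apply: J_sep.
Qed.
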